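(* Let $n\ge1$, let $x$ be a vertex of $Q_n$ and $k_1,\dots,k_m<n$, and let $\mu = [x;\,k_1\dots k_ik_{i+1}\dots k_m]$. For some $i<m$, let $\nu = [x;\,k_1\dots k_{i-1}k_{i+1}k_ik_{i+2}\dots k_m]$ be the path obtained by swapping $k_i$ and $k_{i+1}$. (1) If $k_i\ne k_{i+1}$, then $p_\mu = -p_\nu$ in $C^\ast(Q_n)$. (2) If $k_i = k_{i+1}$, then $p_\mu = p_\nu$.
   Context: For $n\ge1$, identify integers $0\le i<2^n$ with their $n$-digit binary representations and let $i\#k$ be $i$ with its $k$-th digit flipped. The hypercube $Q_n$ has vertex classes $U_n$ (even number of $1$'s) and $V_n$ (odd number of $1$'s), with $i\in U_n$, $j\in V_n$ adjacent iff $j = i\#k$ for some $k<n$. $C^\ast(Q_n)$ is the universal unital C*-algebra generated by projections $p_x$ ($x\in U_n\cup V_n$) with $\sum_{u\in U_n}p_u = 1 = \sum_{v\in V_n}p_v$ and $p_up_v=0$ when $u\in U_n,v\in V_n$ are non-adjacent. For a vertex $x$ and indices $k_1,\dots,k_m<n$, $[x;\,k_1\dots k_m]$ denotes the path $x_1x_2\dots x_{m+1}$ with $x_1=x$ and $x_{r+1} = x_r\#k_r$; for a path $\mu = x_1\dots x_{m+1}$ one sets $p_\mu = p_{x_1}p_{x_2}\cdots p_{x_{m+1}}$. *)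

From HB Require Import structures.
From mathcomp Require Import all_boot all_order all_algebra.
From mathcomp Require Import reals.
From mathcomp Require Import complex.
Set Implicit Arguments. Unset Strict Implicit. Unset Printing Implicit Defensive.
Import Order.TTheory GRing.Theory Num.Theory.
Local Open Scope ring_scope.

Record is_Cstar (R : realType) (A : algType R[i]) (star : A -> A) (nrm : A -> R)
  : Prop := IsCstar {
  star_add : forall x y, star (x + y) = star x + star y;
  star_scale : forall (c : R[i]) x, star (c *: x) = (conjc c) *: star x;
  star_mul : forall x y, star (x * y) = star y * star x;
  star_invol : forall x, star (star x) = x;
  nrm_ge0 : forall x, 0 <= nrm x;
  nrm_eq0 : forall x, nrm x = 0 -> x = 0;
  nrm_triangle : forall x y, nrm (x + y) <= nrm x + nrm y;
  nrm_scale : forall (c : R[i]) x, nrm (c *: x) = ComplexField.Normc.normc c * nrm x;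
  nrm_submul : forall x y, nrm (x * y) <= nrm x * nrm y;
  nrm_cstar : forall x, nrm (star x * x) = nrm x ^+ 2;
  nrm_complete : forall u : nat -> A,
    (forall e : R, 0 < e -> exists N : nat, forall m k : nat,
        (N <= m)%N -> (N <= k)%N -> nrm (u m - u k) < e) ->
    exists l : A, forall e : R, 0 < e -> exists N : nat, forall m : nat,
        (N <= m)%N -> nrm (u m - l) < e
}.

Definition vertex (n : nat) := {ffun 'I_n -> bool}.

Definition flip (n : nat) (x : vertex n) (k : 'I_n) : vertex n :=
  [ffun j => if j == k then ~~ x j else x j].

Definition weight (n : nat) (x : vertex n) : nat := #|[set j | x j]|.

Definition inU (n : nat) (x : vertex n) : bool := ~~ odd (weight x).
Definition inV (n : nat) (x : vertex n) : bool := odd (weight x).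

Definition adjacent (n : nat) (u v : vertex n) : Prop := exists k : 'I_n, v = flip u k.

Definition Qn_relations (n : nat) (R : realType) (A : algType R[i])
  (star : A -> A) (p : vertex n -> A) : Prop :=
  [/\ (forall x, p x * p x = p x /\ star (p x) = p x),
      \sum_(u | inU u) p u = 1,
      \sum_(v | inV v) p v = 1 &
      (forall u v, inU u -> inV v -> ~ adjacent u v -> p u * p v = 0)].

(** The path [x; k_1 ... k_m] as the sequence of its vertices x_1 ... x_{m+1}. *)
Definition path_of (n : nat) (x : vertex n) (ks : seq 'I_n) : seq (vertex n) :=
  x :: scanl (@flip n) x ks.

Definition p_path (n : nat) (A : pzRingType) (p : vertex n -> A) (mu : seq (vertex n)) : A :=
  \prod_(y <- mu) p y.

From HB Require Import structures.
From mathcomp Require Import all_boot all_order all_algebra.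
From mathcomp Require Import reals complex ring.
Import Order.TTheory GRing.Theory Num.Theory ComplexField.Normc.
Local Open Scope ring_scope.
Set Implicit Arguments. Unset Strict Implicit.

(* In a C*-algebra, projections summing to 1 are pairwise orthogonal. Compress
   by e = p_u: the elements c_v = e p_v e (v <> u) sum to 0 and satisfy
   |e - c_v| <= 1, so y = c_w / #|P| satisfies |e + y| <= 1 and |e - y| <= 1.
   For a self-adjoint y with e y = y = y e this forces y = 0: the identities
   (e + c y)^2 + (e + d y)^2 = 2 (e + (c + d) y) when c^2 + d^2 = 0, and
   (e + i y)^* (e + i y) = e + y^2 = ((e + y)^2 + (e - y)^2) / 2, turn
   |e +- y| <= 1 into |e +- 2 y| <= 1, hence |2^r y| <= 2 for all r.
   In C*(Q_n) this kills p_s p_t for distinct s, t in the same class and for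
   non-adjacent s, t. Writing w = z#a#b and inserting 1 = sum of the p_v over the
   class opposite to z into 0 = p_z p_w, only v = z#a and v = z#b survive, so
   p_z p_(z#a) p_w = - p_z p_(z#b) p_w, which is the swap inside any path. *)

Lemma pow2_bounded_eq0 (F : archiRealFieldType) (t c : F) :
  0 <= t -> (forall r, (2 ^ r)%:R * t <= c) -> t = 0.
Proof.
move=> t_ge0 bounded; apply/eqP; rewrite eq_le t_ge0 andbT leNgt.
apply/negP => t_gt0.
have c_ge0 : 0 <= c by apply: le_trans (bounded 0%N); rewrite mul1r.
have [N ct_lt_N] : exists N, c / t < N%:R.
  by exists (Num.Def.archi_bound (c / t)); apply: archi_boundP; rewrite divr_ge0.
have N_le_2N : (N%:R : F) <= (2 ^ N)%:R by rewrite ler_nat ltnW // ltn_expl.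
have := bounded N; apply/negP; rewrite -ltNge -ltr_pdivrMr //.
exact: lt_le_trans ct_lt_N N_le_2N.
Qed.

Section CstarAlgebra.

Variables (R : realType) (A : algType R[i]) (star : A -> A) (nrm : A -> R).
Hypothesis HA : is_Cstar star nrm.

Definition projection (e : A) : Prop := e * e = e /\ star e = e.

Lemma star0 : star 0 = 0.
Proof. by apply: (addrI (star 0)); rewrite -(star_add HA) !addr0. Qed.

Lemma starN x : star (- x) = - star x.
Proof. by apply/eqP; rewrite -subr_eq0 opprK -(star_add HA) addNr star0. Qed.

Lemma star1 : star 1 = 1.
Proof. by have := star_mul HA 1 (star 1); rewrite mul1r (star_invol HA) mul1r => <-. Qed.

Lemma starMn x m : star (x *+ m) = star x *+ m.
Proof. by rewrite -scaler_nat (star_scale HA) conjc_nat scaler_nat. Qed.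

Lemma nrm0 : nrm 0 = 0.
Proof. by rewrite -(scale0r (0 : A)) (nrm_scale HA) normc0 mul0r. Qed.

Lemma nrmN x : nrm (- x) = nrm x.
Proof. by rewrite -scaleN1r (nrm_scale HA) normcN normc1 mul1r. Qed.

Lemma nrmMn x m : nrm (x *+ m) = m%:R * nrm x.
Proof. by rewrite -scaler_nat (nrm_scale HA) normcMn normc1. Qed.

Lemma nrm_avg_le1 (I : finType) (P : pred I) (F : I -> A) :
  (0 < #|P|)%N -> (forall i, P i -> nrm (F i) <= 1) ->
  nrm ((#|P|%:R : R[i])^-1 *: \sum_(i | P i) F i) <= 1.
Proof.
move=> P_gt0 F_le1; rewrite (nrm_scale HA) normcV normcMn normc1.
rewrite ler_pdivrMl ?ltr0n // mulr1 -sum1_card natr_sum.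
elim/big_rec2: _ => [|i s x Pi le_x_s]; first by rewrite nrm0.
by apply: le_trans (nrm_triangle HA _ _) _; rewrite lerD ?F_le1.
Qed.

Lemma nrm_projection_le1 e : projection e -> nrm e <= 1.
Proof.
case=> ee se; have := nrm_cstar HA e; rewrite se ee expr2.
have [->|nz] := eqVneq (nrm e) 0; first by rewrite ler01.
by rewrite -{1}[nrm e]mul1r => /(mulIf nz) <-.
Qed.

Lemma nrm_cstar_le1 x : (nrm (star x * x) <= 1) = (nrm x <= 1).
Proof. by rewrite (nrm_cstar HA) expr_le1 ?(nrm_ge0 HA). Qed.

Lemma cstar_eq0 x : star x * x = 0 -> x = 0.
Proof.
move=> xx0; apply: (nrm_eq0 HA); apply/eqP.
by rewrite -sqrf_eq0 -(nrm_cstar HA) xx0 nrm0.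
Qed.

Lemma nrm_mul_le1 x y : nrm x <= 1 -> nrm y <= 1 -> nrm (x * y) <= 1.
Proof.
move=> x_le1 y_le1; apply: le_trans (nrm_submul HA x y) _.
by rewrite -[1]mul1r ler_pM ?(nrm_ge0 HA).
Qed.

Lemma nrm_le1_of_sqr_sum x y z :
  nrm x <= 1 -> nrm y <= 1 -> x * x + y * y = z *+ 2 -> nrm z <= 1.
Proof.
move=> x_le1 y_le1 xyz; rewrite -(@ler_pM2l _ 2%:R) ?ltr0Sn // mulr1 -nrmMn -xyz.
by apply: le_trans (nrm_triangle HA _ _) _; rewrite [2%:R]mulr2n lerD ?nrm_mul_le1.
Qed.

Lemma projection_compl e : projection e -> projection (1 - e).
Proof.
case=> ee se; split; last by rewrite (star_add HA) starN star1 se.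
by rewrite mulrBr mulr1 !mulrBl mul1r ee subrr subr0.
Qed.

Lemma nrm_sub_compress_le1 e q :
  projection e -> projection q -> nrm (e - e * q * e) <= 1.
Proof.
move=> pe pq; have [ee se] := pe; have [qq _] := projection_compl pq.
have -> : e - e * q * e = star ((1 - q) * e) * ((1 - q) * e).
  case: pq => _ sq; rewrite (star_mul HA) (star_add HA) starN star1 se sq.
  by rewrite mulrA -(mulrA e (1 - q)) qq mulrBr mulr1 mulrBl ee.
rewrite nrm_cstar_le1.
by apply: nrm_mul_le1; apply: nrm_projection_le1 => //; apply: projection_compl.
Qed.

Definition corner (e y : A) : Prop := e * y = y /\ y * e = y.

Lemma cornerZ e y (c : R[i]) : corner e y -> corner e (c *: y).
Proof. by case=> ey ye; split; rewrite -?scalerAl -?scalerAr ?ey ?ye. Qed.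

Lemma cornerN e y : corner e y -> corner e (- y).
Proof. by move=> /(cornerZ (-1)); rewrite scaleN1r. Qed.

Lemma cornerMn e y m : corner e y -> corner e (y *+ m).
Proof. by move=> /(cornerZ m%:R); rewrite scaler_nat. Qed.

Lemma corner_mulDD e y z : e * e = e -> corner e y -> corner e z ->
  (e + y) * (e + z) = e + (y + z) + y * z.
Proof.
move=> ee [_ ye] [ez _]; rewrite mulrDl !mulrDr ee ez ye.
by rewrite addrA -[e + z + y]addrA [z + y]addrC addrA.
Qed.

Lemma nrm_corner_addZ_le1 e y (c d : R[i]) :
  e * e = e -> corner e y -> c ^+ 2 + d ^+ 2 = 0 ->
  nrm (e + c *: y) <= 1 -> nrm (e + d *: y) <= 1 -> nrm (e + (c + d) *: y) <= 1.
Proof.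
move=> ee ye cd0 c_le1 d_le1; apply: nrm_le1_of_sqr_sum c_le1 d_le1 _.
have yZ k : corner e (k *: y) := cornerZ k ye.
rewrite !corner_mulDD // -!scalerAl -!scalerAr !scalerA -!expr2.
rewrite addrACA -[_ *: y ^+ 2 + _]scalerDl cd0 scale0r addr0.
by rewrite -!mulr2n addrACA -mulr2n -!mulrnDl scalerDl.
Qed.

Lemma nrm_corner_i_le1 e y : projection e -> corner e y -> star y = y ->
  nrm (e + y) <= 1 -> nrm (e - y) <= 1 -> nrm (e + 'i%C *: y) <= 1.
Proof.
move=> [ee se] ye sy yp_le1 yn_le1.
have yy_le1 : nrm (e + y * y) <= 1.
  apply: nrm_le1_of_sqr_sum yp_le1 yn_le1 _.
  have yN := cornerN ye; rewrite !corner_mulDD //.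
  rewrite mulrNN addrACA (addrACA e (y + y)) -opprD subrr addr0.
  by rewrite -!mulr2n -mulrnDl.
have star_iy : star (e + 'i%C *: y) = e + (- 'i%C) *: y.
  rewrite (star_add HA) (star_scale HA) se sy.
  by congr (_ + _ *: _); apply/eqP; simpc.
have yZ k : corner e (k *: y) := cornerZ k ye.
rewrite -nrm_cstar_le1 star_iy corner_mulDD //.
rewrite -scalerDl addNr scale0r addr0 -scalerAl -scalerAr scalerA mulNr.
have ii : 'i%C * 'i%C = -1 :> R[i] by rewrite -expr2 sqr_i.
by rewrite ii opprK scale1r.
Qed.

Lemma nrm_corner_double_le1 e y : projection e -> corner e y -> star y = y ->
  nrm (e + y) <= 1 -> nrm (e - y) <= 1 -> nrm (e + y *+ 2) <= 1.
Proof.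
move=> pe ye sy yp_le1 yn_le1; have ee := pe.1.
have iy_le1 := nrm_corner_i_le1 pe ye sy yp_le1 yn_le1.
have niy_le1 : nrm (e + (- 'i%C) *: y) <= 1.
  rewrite scaleNr -scalerN; apply: nrm_corner_i_le1 => //; rewrite ?opprK //.
  - exact: cornerN.
  - by rewrite starN sy.
rewrite -[y]scale1r in yp_le1.
have sq1 : 1 ^+ 2 + 'i%C ^+ 2 = 0 :> R[i] by rewrite expr1n sqr_i addrN.
have sq2 : (- 'i%C) ^+ 2 + 1 ^+ 2 = 0 :> R[i] by rewrite sqrrN sqr_i expr1n addNr.
have sq3 : (- 'i%C + 1) ^+ 2 + (1 + 'i%C) ^+ 2 = 0 :> R[i].
  by rewrite !sqrrD sqrrN sqr_i; ring.
have g1 := nrm_corner_addZ_le1 ee ye sq1 yp_le1 iy_le1.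
have g2 := nrm_corner_addZ_le1 ee ye sq2 niy_le1 yp_le1.
suff -> : y *+ 2 = ((- 'i%C + 1) + (1 + 'i%C)) *: y.
  exact: nrm_corner_addZ_le1 g2 g1.
by rewrite -scaler_nat; congr (_ *: _); ring.
Qed.

Lemma corner_eq0 e y : projection e -> corner e y -> star y = y ->
  nrm (e + y) <= 1 -> nrm (e - y) <= 1 -> y = 0.
Proof.
move=> pe ye sy yp_le1 yn_le1.
have double_le1 r : nrm (e + y *+ 2 ^ r) <= 1 /\ nrm (e - y *+ 2 ^ r) <= 1.
  elim: r => [|r [IHp IHn]]; first by rewrite expn0 !mulr1n.
  have yr := cornerMn (2 ^ r) ye; have syr : star (y *+ 2 ^ r) = y *+ 2 ^ r.
    by rewrite starMn sy.
  rewrite expnSr mulrnA -mulNrn; split; apply: nrm_corner_double_le1 => //.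
  - exact: cornerN.
  - by rewrite starN syr.
  - by rewrite opprK.
apply: (nrm_eq0 HA); apply: (@pow2_bounded_eq0 _ _ 2%:R (nrm_ge0 HA y)) => r.
rewrite -nrmMn -[y *+ _](addKr e) [2%:R]mulr2n.
apply: le_trans (nrm_triangle HA _ _) _; rewrite nrmN lerD //.
  exact: nrm_projection_le1.
exact: (double_le1 r).1.
Qed.

Lemma compress_sum_eq0 (I : finType) (P : pred I) (q : I -> A) e :
  projection e -> (forall v, projection (q v)) ->
  \sum_(v | P v) e * q v * e = 0 -> forall w, P w -> e * q w * e = 0.
Proof.
move=> pe pq sum_eq0 w Pw; have [ee se] := pe.
pose c v := e * q v * e; rewrite -/c.
have M_gt0 : (0 < #|P|)%N by apply/card_gt0P; exists w.
have M_neq0 : (#|P|%:R : R[i]) != 0 by rewrite pnatr_eq0 -lt0n.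
pose y := (#|P|%:R : R[i])^-1 *: c w.
have e_avg : e = (#|P|%:R : R[i])^-1 *: \sum_(v | P v) e.
  by rewrite sumr_const -[e *+ _]scaler_nat scalerA mulVf // scale1r.
have cw_sum : c w = - \sum_(v | P v && (v != w)) c v.
  by apply/eqP; rewrite -addr_eq0 -(bigD1 w Pw) /=; apply/eqP.
have yp : e + y =
    (#|P|%:R : R[i])^-1 *: \sum_(v | P v) (if v == w then e else e - c v).
  rewrite /y {1}e_avg -scalerDr (bigD1 w Pw) [in RHS](bigD1 w Pw) /= eqxx.
  rewrite cw_sum -addrA -sumrB; congr (_ *: (_ + _)).
  by apply: eq_bigr => v /andP[_ /negPf->].
have yn : e - y =
    (#|P|%:R : R[i])^-1 *: \sum_(v | P v) (if v == w then e - c v else e).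
  rewrite /y {1}e_avg -scalerBr (bigD1 w Pw) [in RHS](bigD1 w Pw) /= eqxx.
  rewrite addrAC; congr (_ *: (_ + _)).
  by apply: eq_bigr => v /andP[_ /negPf->].
have c_le1 v : nrm (e - c v) <= 1 by exact: nrm_sub_compress_le1.
have e_le1 : nrm e <= 1 by exact: nrm_projection_le1.
have y0 : y = 0.
  apply: (corner_eq0 pe).
  - by apply: cornerZ; split; rewrite /c; [rewrite !mulrA ee | rewrite -mulrA ee].
  - rewrite /y (star_scale HA) conjc_inv conjc_nat !(star_mul HA) se (pq w).2.
    by rewrite mulrA.
  - by rewrite yp; apply: nrm_avg_le1 => // v _; case: eqP.
  - by rewrite yn; apply: nrm_avg_le1 => // v _; case: eqP.
move: y0; rewrite /y => /(congr1 (fun z => #|P|%:R *: z)).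
by rewrite scalerA mulfV // scale1r scaler0.
Qed.

Lemma projection_sum1_orth (I : finType) (P : pred I) (p : I -> A) :
  (forall v, projection (p v)) -> \sum_(v | P v) p v = 1 ->
  forall u w, P u -> P w -> u != w -> p u * p w = 0.
Proof.
move=> pp sum1 u w Pu Pw uw; have [ee se] := pp u; have [ww sw] := pp w.
have rest_eq0 : \sum_(v | P v && (v != u)) p u * p v * p u = 0.
  apply: (@addrI _ (p u)); rewrite addr0.
  have compress_u : p u = \sum_(v | P v) p u * p v * p u.
    by rewrite -mulr_suml -mulr_sumr sum1 mulr1 ee.
  by rewrite [RHS]compress_u (bigD1 u Pu) /= ee ee.
have uwu : p u * p w * p u = 0.
  by apply: (compress_sum_eq0 (pp u) pp rest_eq0); rewrite Pw eq_sym uw.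
have wu0 : p w * p u = 0.
  apply: cstar_eq0; rewrite (star_mul HA) se sw mulrA -(mulrA (p u) (p w)) ww.
  exact: uwu.
by have := congr1 star wu0; rewrite (star_mul HA) se sw star0.
Qed.

End CstarAlgebra.

Section HypercubeGraph.

Variable n : nat.
Implicit Types (x y : vertex n) (a b k j : 'I_n).

Lemma flipE x k j : flip x k j = if j == k then ~~ x j else x j.
Proof. by rewrite ffunE. Qed.

Lemma flipK k : involutive (@flip n ^~ k).
Proof. by move=> x; apply/ffunP => j; rewrite !flipE; case: eqP; rewrite ?negbK. Qed.

Lemma flipC x a b : flip (flip x a) b = flip (flip x b) a.
Proof. by apply/ffunP => j; rewrite !flipE; do 2 case: eqP. Qed.

Lemma inU_flip x k : inU (flip x k) = ~~ inU x.
Proof.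
rewrite /inU /weight negbK (cardsD1 k [set j | flip x k j]) (cardsD1 k [set j | x j]).
have -> : [set j | flip x k j] :\ k = [set j | x j] :\ k.
  by apply/setP => j; rewrite !inE flipE; case: eqP.
by rewrite !inE flipE eqxx !oddD; case: (x k); rewrite ?negbK.
Qed.

Lemma inV_inU x : inV x = ~~ inU x.
Proof. by rewrite /inU /inV negbK. Qed.

Lemma adjacent_sym x y : adjacent x y -> adjacent y x.
Proof. by case=> k ->; exists k; rewrite flipK. Qed.

Lemma flip_eq x a b : (flip x a == flip x b) = (a == b).
Proof.
apply/eqP/eqP => [/(congr1 (fun y => y a))|-> //].
by rewrite !flipE eqxx; case: eqP => // _; case: (x a).
Qed.

Lemma flip2_neq x a b : a != b -> flip (flip x a) b != x.
Proof.
move=> ab; apply/eqP => /(congr1 (fun y => y a)).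
by rewrite !flipE eqxx (negPf ab); case: (x a).
Qed.

Lemma flip_neq_flip3 x a b k j : a != b -> k != a -> k != b ->
  flip x k != flip (flip (flip x a) b) j.
Proof.
move=> ab ka kb; apply/eqP => eq_xk.
have := congr1 (fun y => y k) eq_xk; rewrite !flipE eqxx (negPf ka) (negPf kb).
case: eqP => [kj _|_]; last by case: (x k).
subst j.
have := congr1 (fun y => y a) eq_xk; rewrite !flipE eqxx eq_sym (negPf ka) (negPf ab).
by case: (x a).
Qed.

End HypercubeGraph.

Section HypercubeRelations.

Variables (n : nat) (R : realType) (A : algType R[i]) (star : A -> A) (nrm : A -> R).
Hypothesis HA : is_Cstar star nrm.
Variable p : vertex n -> A.
Hypothesis Hp : Qn_relations star p.
Implicit Types (s t v x z : vertex n) (a b : 'I_n).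

Lemma p_projection v : projection star (p v).
Proof. by case: Hp => pp _ _ _; apply: pp. Qed.

Lemma p_orth_same s t : inU s = inU t -> s != t -> p s * p t = 0.
Proof.
case: Hp => _ sumU sumV _ st st_neq; case sU: (inU s) in st.
  by apply: (projection_sum1_orth HA p_projection sumU); rewrite // -st.
by apply: (projection_sum1_orth HA p_projection sumV); rewrite // inV_inU -?st ?sU.
Qed.

Lemma p_orth_nonadj s t : inU s != inU t -> ~ adjacent s t -> p s * p t = 0.
Proof.
case: Hp => _ _ _ orth st nadj_st; case sU: (inU s) in st.
  by apply: orth; rewrite // inV_inU; move: st; case: (inU t).
have ts0 : p t * p s = 0.
  apply: orth; first by move: st; case: (inU t).
  - by rewrite inV_inU sU.
  - by move/adjacent_sym.
have := congr1 star ts0.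
by rewrite (star_mul HA) (p_projection s).2 (p_projection t).2 (star0 HA).
Qed.

Lemma sum_p_opposite_class z : \sum_(v | inU v != inU z) p v = 1.
Proof.
case: Hp => _ sumU sumV _; case: (inU z).
  by rewrite -sumV; apply: eq_bigl => v; rewrite inV_inU; case: (inU v).
by rewrite -sumU; apply: eq_bigl => v; case: (inU v).
Qed.

Lemma p_detour_eq0 z v a b : a != b -> inU v != inU z ->
  v != flip z a -> v != flip z b -> p z * p v * p (flip (flip z a) b) = 0.
Proof.
move=> ab vz va vb.
have [/existsP[k /eqP vk]|nadj] := boolP [exists k, v == flip z k]; last first.
  rewrite p_orth_nonadj ?mul0r //; first by rewrite eq_sym.
  by case=> k vk; apply: (negP nadj); apply/existsP; exists k; rewrite vk.
rewrite -mulrA p_orth_nonadj ?mulr0 //.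
  by rewrite vk !inU_flip (negbK (inU z)); case: (inU z).
case=> j /(congr1 (fun y => flip y j)); rewrite flipK vk => /eqP; apply/negP.
rewrite eq_sym flip_neq_flip3 //.
  by apply: contraNneq va => <-; rewrite vk.
by apply: contraNneq vb => <-; rewrite vk.
Qed.

Lemma p_flip_anticomm z a b : a != b ->
  p z * p (flip z a) * p (flip (flip z a) b) =
  - (p z * p (flip z b) * p (flip (flip z a) b)).
Proof.
move=> ab; set w := flip (flip z a) b.
have zw0 : p z * p w = 0.
  by rewrite p_orth_same // ?inU_flip ?negbK // eq_sym flip2_neq.
have za : inU (flip z a) != inU z by rewrite inU_flip; case: (inU z).
have zb : (inU (flip z b) != inU z) && (flip z b != flip z a).
  by rewrite inU_flip flip_eq (eq_sym b) ab; case: (inU z).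
have sum_eq0 : p z * p w = \sum_(v | inU v != inU z) p z * p v * p w.
  by rewrite -mulr_suml -mulr_sumr sum_p_opposite_class mulr1.
have rest_eq0 : \sum_(v | (inU v != inU z) && (v != flip z a) && (v != flip z b))
    p z * p v * p w = 0.
  by apply: big1 => v /andP[/andP[vz va] vb]; exact: p_detour_eq0.
rewrite zw0 (bigD1 (flip z a)) //= (bigD1 (flip z b)) //= rest_eq0 addr0 in sum_eq0.
by apply/eqP; rewrite -addr_eq0 sum_eq0.
Qed.

Lemma p_path_mulr_last x ks :
  p_path p (path_of x ks) * p (foldl (@flip n) x ks) = p_path p (path_of x ks).
Proof.
rewrite /p_path /path_of; elim: ks x => [|k ks IH] x /=.
  by rewrite big_seq1 (p_projection x).1.
by rewrite big_cons -mulrA IH.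
Qed.

End HypercubeRelations.

Unset Implicit Arguments.

Theorem lemma3p3 (n : nat) (Hn : (0 < n)%N)
  (R : realType) (A : algType R[i]) (star : A -> A) (nrm : A -> R)
  (HA : is_Cstar star nrm) (p : vertex n -> A) (Hp : Qn_relations star p)
  (x : vertex n) (ks1 ks2 : seq 'I_n) (a b : 'I_n) :
  let mu := path_of x (ks1 ++ a :: b :: ks2) in
  let nu := path_of x (ks1 ++ b :: a :: ks2) in
  (a != b -> p_path p mu = - p_path p nu) /\
  (a = b -> p_path p mu = p_path p nu).
Proof.
move=> mu nu; split=> [ab|ab]; last by rewrite /mu /nu ab.
have := p_path_mulr_last Hp x ks1; rewrite /mu /nu /p_path /path_of => end_z.
rewrite !scanl_cat -!cat_cons !big_cat -end_z /= !big_cons.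
set z := foldl _ x ks1; set w := flip (flip z a) b.
rewrite [flip (flip z b) a]flipC -/w.
have swap Y :
    p z * (p (flip z a) * (p w * Y)) = - (p z * (p (flip z b) * (p w * Y))).
  by rewrite !mulrA (p_flip_anticomm HA Hp) // mulNr.
by rewrite -!mulrA swap !mulrN.
Qed.
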